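(* Let $P=\{p_1,\dots,p_d\}$ be a maximal ranked poset of rank $n$, with rank levels $P_0,\dots,P_n$. (a) Let $I$ and $J$ be poset ideals of $P$ with $I\neq J$. Then $\{I,J\}\in E^{*}_{\mathcal O(P)}$ if and only if $I=\emptyset$, $J$ is connected in $P$, and $|\max(J)|\ge 2$. (b) Let $A$ and $B$ be antichains of $P$ with $A\neq B$. Then $\{A,B\}\in E^{*}_{\mathcal C(P)}$ if and only if there exists some $\ell$ with $1\le \ell\le n$ such that $A=P_{\ell-1}$, $B\subset P_\ell$, and $|B|\ge 2$.
   Context: For a finite poset $P=\{p_1,\dots,p_d\}$ and $W\subset P$ put $\rho(W)=\sum_{p_i\in W}\mathbf e_i\in\mathbb R^d$ ($\rho(\emptyset)=0$). The order polytope is $\mathcal O(P)=\{x\in\mathbb R^d: 0\le x_i\le 1 \text{ for all } i,\ x_i\ge x_j \text{ if } p_i\le p_j\}$ and the chain polytope is $\mathcal C(P)=\{x\in\mathbb R^d: x_i\ge 0 \text{ for all } i,\ x_{i_1}+\dots+x_{i_k}\le 1 \text{ if } p_{i_1}<\dots<p_{i_k}\}$. Poset ideals and antichains include $\emptyset$. For a poset ideal $I$, $\max(I)$ is its set of maximal elements; for an antichain $A$, $\langle A\rangle=\{x: x\le p \text{ for some } p\in A\}$. A nonempty subset $Q\subset P$ is connected in $P$ if the induced subgraph of the comparability graph of $P$ on $Q$ is connected. $E^{*}_{\mathcal O(P)}$ is the set of pairs $\{I,J\}$ of distinct poset ideals such that $\mathrm{conv}\{\rho(I),\rho(J)\}$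 is an edge of $\mathcal O(P)$ but $\mathrm{conv}\{\rho(\max I),\rho(\max J)\}$ is not an edge of $\mathcal C(P)$. $E^{*}_{\mathcal C(P)}$ is the set of pairs $\{A,B\}$ of distinct antichains such that $\mathrm{conv}\{\rho(A),\rho(B)\}$ is an edge of $\mathcal C(P)$ but $\mathrm{conv}\{\rho(\langle A\rangle),\rho(\langle B\rangle)\}$ is not an edge of $\mathcal O(P)$. The length of a chain $C$ is $|C|-1$; $P$ is graded of rank $n$ if every maximal chain has length $n$, and then $P=\bigcup_{i=0}^n P_i$ where every maximal chain is $p_0<p_1<\dots<p_n$ with $p_i\in P_i$ ($P_i$ = elements of rank $i$). $P$ is a maximal ranked poset if it is graded and any two elements of distinct ranks are comparable. *)

From HB Require Import structures.
From mathcomp Require Import all_boot all_order all_algebra.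
From mathcomp Require Import reals.

Set Implicit Arguments.
Unset Strict Implicit.
Unset Printing Implicit Defensive.

Import Order.Theory GRing.Theory Num.Theory.

Section PosetDefs.
Context {disp : Order.disp_t} {T : finPOrderType disp}.

Definition is_chain (C : {set T}) : Prop :=
  forall x y, x \in C -> y \in C -> (x >=< y)%O.

Definition is_max_chain (C : {set T}) : Prop :=
  is_chain C /\ forall D : {set T}, is_chain D -> C \subset D -> D = C.

Definition is_antichain (A : {set T}) : Prop :=
  forall x y, x \in A -> y \in A -> (x <= y)%O -> x = y.

Definition is_ideal (I : {set T}) : Prop :=
  forall x y, y \in I -> (x <= y)%O -> x \in I.

Definition maxel (I : {set T}) : {set T} :=
  [set x in I | [forall y in I, (x <= y)%O ==> (y == x)]].

Definition down (A : {set T}) : {set T} :=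
  [set x | [exists y in A, (x <= y)%O]].

Definition comp_rel (Q : {set T}) : rel T :=
  fun x y => [&& x \in Q, y \in Q & (x >=< y)%O].

Definition connected_in (Q : {set T}) : Prop :=
  Q != set0 /\ forall x y, x \in Q -> y \in Q -> connect (comp_rel Q) x y.

(* graded of rank n: every maximal chain has length n (i.e. n+1 elements) *)
Definition graded (n : nat) : Prop :=
  forall C : {set T}, is_max_chain C -> #|C| = n.+1.

Definition chainb (C : {set T}) : bool :=
  [forall x in C, forall y in C, (x >=< y)%O].

Definition rank (x : T) : nat :=
  (\max_(C : {set T} | chainb C && [forall y in C, (y <= x)%O]) #|C|).-1.

Definition level (i : nat) : {set T} := [set x | rank x == i].

Definition max_ranked (n : nat) : Prop :=
  graded n /\ forall x y, rank x != rank y -> (x >=< y)%O.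

End PosetDefs.

Section Polytopes.
Context {R : realType} {disp : Order.disp_t} {T : finPOrderType disp}.
Local Open Scope ring_scope.

(* points of R^d are functions T -> R *)
Definition rho (W : {set T}) : T -> R := fun i => if i \in W then 1 else 0.

Definition order_polytope (x : T -> R) : Prop :=
  (forall i, 0 <= x i <= 1) /\ (forall i j, (i <= j)%O -> x j <= x i).

Definition chain_polytope (x : T -> R) : Prop :=
  (forall i, 0 <= x i) /\
  (forall C : {set T}, is_chain C -> \sum_(i in C) x i <= 1).

Definition segment (u v : T -> R) (x : T -> R) : Prop :=
  exists t : R, 0 <= t <= 1 /\ x = (fun i => (1 - t) * u i + t * v i).

(* conv{u,v} is an edge of the polytope Q: u <> v and conv{u,v} is a face,
   i.e. the intersection of Q with a supporting hyperplane *)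
Definition is_edge (Q : (T -> R) -> Prop) (u v : T -> R) : Prop :=
  u <> v /\
  exists (c : T -> R) (b : R),
    (forall x, Q x -> \sum_i c i * x i <= b) /\
    (forall x, (Q x /\ \sum_i c i * x i = b) <-> segment u v x).

Definition EstarO (I J : {set T}) : Prop :=
  [/\ is_ideal I, is_ideal J, I <> J,
      is_edge order_polytope (rho I) (rho J)
    & ~ is_edge chain_polytope (rho (maxel I)) (rho (maxel J))].

Definition EstarC (A B : {set T}) : Prop :=
  [/\ is_antichain A, is_antichain B, A <> B,
      is_edge chain_polytope (rho A) (rho B)
    & ~ is_edge order_polytope (rho (down A)) (rho (down B))].

End Polytopes.

From Pilot Require Import Defs.
From HB Require Import structures.
From mathcomp Require Import all_boot all_order all_algebra.
From mathcomp Require Import reals.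
From mathcomp Require Import ring lra.
From Stdlib Require Import FunctionalExtensionality.

(* In a maximal ranked poset two elements are comparable iff they are equal or have different
   ranks, so an antichain lies in one level, the maximal elements of an ideal form its top
   level, and <A> consists of A and all lower levels.
   A segment [rho U, rho V] is not an edge as soon as rho Y + rho Z = rho U + rho V for
   vertices rho Y, rho Z with Y distinct from U and V; it is an edge when some valid
   inequalities are tight exactly on it. This gives the classical description of the edges
   of O(P) (up to order, I contained in J with J \ I connected) and two families of edges
   of C(P): {A, x |: A}, and {A, B} with A entirely below B.
   (a) If I is nonempty, max I and max J lie in different levels or differ by one point, so
   they span an edge of C(P); if I is empty, max J spans an edge with 0 iff it is a point.
   (b) If A and B lie in one level, a chain edge forces (up to symmetry) B = A \ {x}, and
   <A> \ <B> is connected through x. Otherwise, with A below B, <B> \ <A> is disconnected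
   iff |B| >= 2 and A is the whole level just below that of B. *)

Set Implicit Arguments.
Unset Strict Implicit.
Unset Printing Implicit Defensive.
Import Order.Theory GRing.Theory Num.Theory.

Section Posets.
Context {disp : Order.disp_t} {T : finPOrderType disp}.
Implicit Types (x y : T) (A B D I J : {set T}).

Lemma ideal0 : is_ideal (set0 : {set T}).
Proof. by move=> x y; rewrite inE. Qed.

Lemma ideal_setI I J : is_ideal I -> is_ideal J -> is_ideal (I :&: J).
Proof.
move=> idI idJ x y; rewrite !inE => /andP[yI yJ] xy.
by rewrite (idI _ _ yI xy) (idJ _ _ yJ xy).
Qed.

Lemma ideal_setU I J : is_ideal I -> is_ideal J -> is_ideal (I :|: J).
Proof.
move=> idI idJ x y; rewrite !inE => /orP[yI|yJ] xy; first by rewrite (idI _ _ yI xy).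
by rewrite (idJ _ _ yJ xy) orbT.
Qed.

Lemma downP A x : reflect (exists2 a, a \in A & (x <= a)%O) (x \in down A).
Proof. by rewrite inE; apply: (iffP exists_inP). Qed.

Lemma down_ideal A : is_ideal (down A).
Proof.
by move=> x y /downP[a aA ya] xy; apply/downP; exists a; rewrite // (le_trans xy ya).
Qed.

Lemma down_subset A B : A \subset B -> down A \subset down B.
Proof.
move=> sAB; apply/subsetP => x /downP[a aA xa].
by apply/downP; exists a; rewrite ?(subsetP sAB).
Qed.

Lemma antichain_subset A B : is_antichain B -> A \subset B -> is_antichain A.
Proof. by move=> antiB sAB x y xA yA; apply: antiB; apply: (subsetP sAB). Qed.

Lemma antichain_maxel I : is_antichain (maxel I).
Proof.
move=> x y; rewrite !inE => /andP[_ /forall_inP xmax] /andP[yI _] xy.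
by apply/esym/eqP; apply: (implyP (xmax y yI)).
Qed.

Lemma maxel0 : maxel (set0 : {set T}) = set0.
Proof. by apply/setP => x; rewrite !inE. Qed.

Lemma comp_rel_sym D : connect_sym (comp_rel D).
Proof.
apply: sym_connect_sym => x y; rewrite /comp_rel comparable_sym.
by case: (x \in D); case: (y \in D).
Qed.

Lemma connected_in_hub D h :
  h \in D -> {in D, forall x, connect (comp_rel D) h x} -> connected_in D.
Proof.
move=> hD hub; split; first by apply/set0Pn; exists h.
move=> x y xD yD; apply: (connect_trans (y := h)); last exact: hub.
by rewrite comp_rel_sym; apply: hub.
Qed.

Lemma comp_rel_connect_eq (U : eqType) D (f : T -> U) :
  {in D &, forall p q, (p >=< q)%O -> f p = f q} ->
  forall a b, connect (comp_rel D) a b -> f a = f b.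
Proof.
move=> f_comp a b ab.
have f_closed : closed (comp_rel D) [pred y | f y == f a].
  by move=> x y /and3P[xD yD xy]; rewrite !inE (f_comp x y xD yD xy).
by have := closed_connect f_closed ab; rewrite !inE eqxx => /esym/eqP.
Qed.

Lemma connected_antichain A : is_antichain A -> connected_in A -> exists a, A = [set a].
Proof.
move=> antiA [/set0Pn[a aA] connA]; exists a; apply/setP => x; rewrite inE.
apply/idP/eqP => [xA|->//]; apply/esym/(comp_rel_connect_eq (f := id) _ (connA a x aA xA)).
by move=> u v uA vA /comparable_leP[/(antiA _ _ uA vA)|/ltW/(antiA _ _ vA uA)].
Qed.

Lemma ideal_setU_closed I J (S : {pred T}) :
  is_ideal I -> is_ideal J -> closed (comp_rel (J :\: I)) S ->
  is_ideal (I :|: [set x in J :\: I | x \in S]).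
Proof.
move=> idI idJ S_closed x y; rewrite !inE => /orP[yI|/andP[/andP[yI yJ] yS]] xy.
  by rewrite (idI _ _ yI xy).
have xJ := idJ _ _ yJ xy; case: (boolP (x \in I)) => //= xI.
rewrite xJ /= -(S_closed y x) //.
by rewrite /comp_rel !inE xI xJ yI yJ comparable_sym le_comparable.
Qed.

End Posets.

Section Edges.
Context {R : realType} {disp : Order.disp_t} {T : finPOrderType disp}.
Local Open Scope ring_scope.
Local Notation rho := (@rho R disp T).

Definition dot (c x : T -> R) : R := \sum_i c i * x i.

Definition unit_vec (i : T) : T -> R := fun m => (m == i)%:R.

Lemma dot_unit_vec i x : dot (unit_vec i) x = x i.
Proof.
rewrite /dot (bigD1 i) //= /unit_vec eqxx mul1r big1 ?addr0 // => m /negbTE ->.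
by rewrite mul0r.
Qed.

Lemma dotN c x : dot (fun m => - c m) x = - dot c x.
Proof. by rewrite /dot -sumrN; apply: eq_bigr => m _; rewrite mulNr. Qed.

Lemma dotD c d x : dot (fun m => c m + d m) x = dot c x + dot d x.
Proof. by rewrite /dot -big_split; apply: eq_bigr => m _; rewrite mulrDl. Qed.

Lemma dotB c d x : dot (fun m => c m - d m) x = dot c x - dot d x.
Proof. by rewrite dotD dotN. Qed.

Lemma segment_l (u v : T -> R) : segment u v u.
Proof.
exists 0; rewrite lexx ler01; split=> //.
by apply: functional_extensionality => i; rewrite subr0 mul1r mul0r addr0.
Qed.

Lemma segment_r (u v : T -> R) : segment u v v.
Proof.
exists 1; rewrite lexx ler01; split=> //.
by apply: functional_extensionality => i; rewrite subrr mul0r add0r mul1r.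
Qed.

Lemma segmentC (u v x : T -> R) : segment u v x -> segment v u x.
Proof.
move=> [t [/andP[t0 t1] ->]]; exists (1 - t); split; first by apply/andP; lra.
by apply: functional_extensionality => i; ring.
Qed.

Lemma dot_segment (c u v x : T -> R) :
  segment u v x -> exists2 t, 0 <= t <= 1 & dot c x = (1 - t) * dot c u + t * dot c v.
Proof.
move=> [t [t01 ->]]; exists t => //.
by rewrite /dot !mulr_sumr -big_split; apply: eq_bigr => i _ /=; ring.
Qed.

Lemma is_edgeC (Q : (T -> R) -> Prop) (u v : T -> R) : is_edge Q u v -> is_edge Q v u.
Proof.
move=> [nuv [c [b [valid face]]]]; split; first by move/esym.
by exists c, b; split=> // x; split=> [/face/segmentC | /segmentC/face].
Qed.

(* A face cut out by finitely many valid inequalities is cut out by their sum. *)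
Lemma edge_of_tight_family (Q : (T -> R) -> Prop) (u v : T -> R)
    (K : finType) (P : pred K) (c : K -> T -> R) (b : K -> R) :
  u <> v -> (forall x, segment u v x -> Q x) ->
  (forall k x, P k -> Q x -> dot (c k) x <= b k) ->
  (forall k, P k -> dot (c k) u = b k /\ dot (c k) v = b k) ->
  (forall x, Q x -> (forall k, P k -> dot (c k) x = b k) -> segment u v x) ->
  is_edge Q u v.
Proof.
move=> nuv convex valid tight face; split=> //.
exists (fun i => \sum_(k | P k) c k i), (\sum_(k | P k) b k).
have dot_sum x : \sum_i (\sum_(k | P k) c k i) * x i = \sum_(k | P k) dot (c k) x.
  by rewrite exchange_big /=; apply: eq_bigr => i _; rewrite mulr_suml.
split=> [x Qx | x]; first by rewrite dot_sum; apply: ler_sum => k Pk; apply: valid.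
rewrite dot_sum; split=> [[Qx sum_tight] | ux].
  apply: face => // k Pk; apply/eqP; rewrite eq_le valid //=.
  have gap0 : \sum_(k | P k) (b k - dot (c k) x) = 0 by rewrite sumrB sum_tight subrr.
  have /psumr_eq0P gapk : forall k, P k -> 0 <= b k - dot (c k) x.
    by move=> k' Pk'; rewrite subr_ge0 valid.
  by rewrite -subr_le0 (gapk gap0 k Pk).
split; first exact: convex.
apply: eq_bigr => k Pk; have [cu cv] := tight k Pk.
by have [t _ ->] := dot_segment (c k) ux; rewrite cu cv; ring.
Qed.

Lemma edge_sum_segment (Q : (T -> R) -> Prop) (u v y z : T -> R) :
  is_edge Q u v -> Q y -> Q z -> (forall i, y i + z i = u i + v i) -> segment u v y.
Proof.
move=> [_ [c [b [valid face]]]] Qy Qz yz.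
have [Qu cu] := proj2 (face u) (segment_l u v).
have [Qv cv] := proj2 (face v) (segment_r u v).
apply/face; split=> //.
have sum_eq : \sum_i c i * y i + \sum_i c i * z i = \sum_i c i * u i + \sum_i c i * v i.
  by rewrite -!big_split /=; apply: eq_bigr => i _; rewrite -!mulrDr yz.
by have := valid y Qy; have := valid z Qz; lra.
Qed.

Lemma rho_inj : injective rho.
Proof.
move=> U V eUV; apply/setP => k; have := congr1 (fun f : T -> R => f k) eUV.
rewrite /Defs.rho; case: (k \in U); case: (k \in V) => //= /eqP.
  by rewrite oner_eq0.
by rewrite eq_sym oner_eq0.
Qed.

Lemma rho_segment (U V W : {set T}) : segment (rho U) (rho V) (rho W) -> W = U \/ W = V.
Proof.
move=> [t [/andP[t_ge0 t_le1] eW]].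
have coord k : rho W k = (1 - t) * rho U k + t * rho V k by rewrite eW.
have [t0|t_neq0] := eqVneq t 0.
  by left; apply: rho_inj; apply: functional_extensionality => k; rewrite coord t0; ring.
have [t1|t_neq1] := eqVneq t 1.
  by right; apply: rho_inj; apply: functional_extensionality => k; rewrite coord t1; ring.
have t_gt0 : 0 < t by rewrite lt_def t_neq0.
have t_lt1 : t < 1 by rewrite lt_def eq_sym t_neq1.
left; apply/setP => k; move: (coord k); rewrite /Defs.rho.
by case: (k \in W); case: (k \in U); case: (k \in V) => //=; lra.
Qed.

Lemma rho_setU_setI (Y Z : {set T}) i : rho (Y :|: Z) i + rho (Y :&: Z) i = rho Y i + rho Z i.
Proof. by rewrite /Defs.rho !inE; case: (i \in Y); case: (i \in Z); rewrite /= ?addr0 ?add0r. Qed.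

(* The midpoint of [rho U, rho V] is that of [rho Y, rho Z], so a face containing the former
   contains rho Y. *)
Lemma rho_not_edge (Q : (T -> R) -> Prop) (U V Y Z : {set T}) :
  Q (rho Y) -> Q (rho Z) -> Y :|: Z = U :|: V -> Y :&: Z = U :&: V ->
  Y != U -> Y != V -> ~ is_edge Q (rho U) (rho V).
Proof.
move=> QY QZ eU eI nYU nYV /edge_sum_segment /(_ QY QZ) seg.
have /rho_segment[/eqP|/eqP] : segment (rho U) (rho V) (rho Y).
  by apply: seg => i; rewrite -rho_setU_setI eU eI rho_setU_setI.
  by rewrite (negbTE nYU).
by rewrite (negbTE nYV).
Qed.

Lemma segment_rho (U V : {set T}) (x : T -> R) t : 0 <= t <= 1 ->
  {in U :&: V, forall i, x i = 1} -> {in ~: (U :|: V), forall i, x i = 0} ->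
  {in U :\: V, forall i, x i = 1 - t} -> {in V :\: U, forall i, x i = t} ->
  segment (rho U) (rho V) x.
Proof.
move=> t01 xUV x0 xU xV; exists t; split=> //; apply: functional_extensionality => i.
rewrite /Defs.rho; case: (boolP (i \in U)) => iU; case: (boolP (i \in V)) => iV.
- by rewrite xUV ?inE ?iU ?iV //; ring.
- by rewrite xU ?inE ?iU ?(negbTE iV) //; ring.
- by rewrite xV ?inE ?(negbTE iU) ?iV //; ring.
- by rewrite x0 ?inE ?(negbTE iU) ?(negbTE iV) //; ring.
Qed.

End Edges.

Section OrderPolytope.
Context {R : realType} {disp : Order.disp_t} {T : finPOrderType disp}.
Local Open Scope ring_scope.
Local Notation rho := (@rho R disp T).

Lemma order_polytope_rho (I : {set T}) : is_ideal I -> order_polytope (rho I).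
Proof.
move=> idI; split=> [i|i j ij]; rewrite /Defs.rho.
  by case: (i \in I); rewrite ?lexx ?ler01.
case: (boolP (j \in I)) => jI; first by rewrite (idI _ _ jI ij) lexx.
by case: (i \in I); rewrite ?ler01 ?lexx.
Qed.

Lemma order_polytope_segment (u v x : T -> R) :
  order_polytope u -> order_polytope v -> segment u v x -> order_polytope x.
Proof.
move=> [u01 u_anti] [v01 v_anti] [t [/andP[t0 t1] ->]]; split=> [i|i j ij].
  by have /andP[? ?] := u01 i; have /andP[? ?] := v01 i; apply/andP; split; nra.
by have := u_anti i j ij; have := v_anti i j ij; nra.
Qed.

Lemma order_edge_subset (I J : {set T}) : is_ideal I -> is_ideal J ->
  is_edge order_polytope (rho I) (rho J) -> I \subset J \/ J \subset I.
Proof.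
move=> idI idJ edge; have [sIJ|nIJ] := boolP (I \subset J); first by left.
have [sJI|nJI] := boolP (J \subset I); first by right.
exfalso; apply: (rho_not_edge (Y := I :&: J) (Z := I :|: J)) edge.
- exact/order_polytope_rho/ideal_setI.
- exact/order_polytope_rho/ideal_setU.
- by apply/setP => x; rewrite !inE; case: (x \in I); case: (x \in J).
- by apply/setP => x; rewrite !inE; case: (x \in I); case: (x \in J).
- by apply: contraNneq nIJ => <-; apply: subsetIr.
- by apply: contraNneq nJI => <-; apply: subsetIl.
Qed.

Lemma order_edge_connected (I J : {set T}) : is_ideal I -> is_ideal J -> I \subset J ->
  is_edge order_polytope (rho I) (rho J) -> connected_in (J :\: I).
Proof.
move=> idI idJ sIJ edge; split.
  apply/negP; rewrite setD_eq0 => sJI; apply: (proj1 edge).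
  by have -> : I = J by apply/eqP; rewrite eqEsubset sIJ.
move=> x y; rewrite !inE => /andP[xI xJ] /andP[yI yJ]; apply: contraT => nxy.
pose S := connect (comp_rel (J :\: I)) x.
have S_closed : closed (comp_rel (J :\: I)) S by apply/connect_closed/comp_rel_sym.
exfalso; apply: (rho_not_edge (Y := I :|: [set z in J :\: I | z \in S])
                              (Z := I :|: [set z in J :\: I | z \in predC S])) edge.
- exact/order_polytope_rho/ideal_setU_closed.
- exact/order_polytope_rho/ideal_setU_closed/predC_closed.
- apply/setP => z; move: (subsetP sIJ z); rewrite !inE -[S z]/(z \in S).
  by case: (z \in I); case: (z \in J); case: (z \in S) => //= ->.
- apply/setP => z; move: (subsetP sIJ z); rewrite !inE -[S z]/(z \in S).
  by case: (z \in I); case: (z \in J); case: (z \in S) => //= ->.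
- by apply/eqP => /setP/(_ x); rewrite !inE (negbTE xI) xJ /= /S connect0.
- by apply/eqP => /setP/(_ y); rewrite !inE (negbTE yI) yJ /= /S (negbTE nxy).
Qed.

Lemma order_face_segment (I J : {set T}) (x : T -> R) :
  I \subset J -> connected_in (J :\: I) -> order_polytope x ->
  {in I, forall i, x i = 1} -> {in ~: J, forall j, x j = 0} ->
  {in J :\: I &, forall p q, (p <= q)%O -> x p = x q} ->
  segment (rho I) (rho J) x.
Proof.
move=> sIJ [/set0Pn[d dD] D_conn] [x01 _] x1 x0 x_le.
have x_const : {in J :\: I, forall p, x p = x d}.
  move=> p pD; apply/esym/(comp_rel_connect_eq _ (D_conn _ _ dD pD)) => q r qD rD.
  by case/comparable_leP => [/x_le|/ltW/x_le/esym]; apply.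
apply: (segment_rho (t := x d)) => [|i|i|i|//]; rewrite ?inE.
- exact: x01.
- by case/andP=> iI _; apply: x1.
- by rewrite negb_or => /andP[_ iJ]; apply: x0; rewrite inE.
- by case/andP=> iJ iI; have := subsetP sIJ i iI; rewrite (negbTE iJ).
Qed.

(* The valid inequalities x_i <= 1 (i in I), 0 <= x_j (j not in J) and x_q <= x_p
   (p <= q in J \ I) are tight exactly on the segment. *)
Lemma order_edge_of_connected (I J : {set T}) : is_ideal I -> is_ideal J -> I \subset J ->
  connected_in (J :\: I) -> is_edge order_polytope (rho I) (rho J).
Proof.
move=> idI idJ sIJ D_conn.
pose P (k : (T + T) + T * T) := match k with
  | inl (inl i) => i \in I
  | inl (inr j) => j \notin J
  | inr (p, q) => [&& p \in J :\: I, q \in J :\: I & (p <= q)%O] end.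
pose c (k : (T + T) + T * T) : T -> R := match k with
  | inl (inl i) => unit_vec i
  | inl (inr j) => fun m => - unit_vec j m
  | inr (p, q) => fun m => unit_vec q m - unit_vec p m end.
pose b (k : (T + T) + T * T) : R := if k is inl (inl _) then 1 else 0.
apply: (edge_of_tight_family (P := P) (c := c) (b := b)).
- by move/rho_inj => eIJ; case: D_conn; rewrite eIJ setDv eqxx.
- by move=> x; apply: order_polytope_segment; apply: order_polytope_rho.
- move=> [[i|j]|[p q]] x /= Pk [x01 x_anti]; rewrite ?dotN ?dotB !dot_unit_vec.
  + by case/andP: (x01 i).
  + by rewrite oppr_le0; case/andP: (x01 j).
  + by rewrite subr_le0 x_anti //; case/and3P: Pk.
- move=> [[i|j]|[p q]] /= Pk; rewrite ?dotN ?dotB !dot_unit_vec /Defs.rho.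
  + by rewrite Pk (subsetP sIJ _ Pk).
  + by rewrite (negbTE Pk) (contraNF (subsetP sIJ j) Pk) oppr0.
  + by case/and3P: Pk; rewrite !inE => /andP[/negbTE-> ->] /andP[/negbTE-> ->] _; rewrite !subrr.
- move=> x Ox tight; apply: order_face_segment => //.
  + by move=> i iI; have := tight (inl (inl i)) iI; rewrite /= dot_unit_vec.
  + move=> j; rewrite inE => jJ; have := tight (inl (inr j)) jJ.
    by rewrite /= dotN dot_unit_vec => /eqP; rewrite oppr_eq0 => /eqP.
  + move=> p q pD qD pq; have := tight (inr (p, q)); rewrite /= pD qD pq dotB !dot_unit_vec.
    by move=> /(_ isT) /eqP; rewrite subr_eq0 => /eqP.
Qed.

Lemma order_edgeP (I J : {set T}) : is_ideal I -> is_ideal J -> I \subset J ->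
  is_edge order_polytope (rho I) (rho J) <-> connected_in (J :\: I).
Proof.
move=> idI idJ sIJ; split; first exact: order_edge_connected.
exact: order_edge_of_connected.
Qed.

End OrderPolytope.

Section ChainPolytope.
Context {R : realType} {disp : Order.disp_t} {T : finPOrderType disp}.
Local Open Scope ring_scope.
Local Notation rho := (@rho R disp T).

Lemma chain_polytope_rho (A : {set T}) : is_antichain A -> chain_polytope (rho A).
Proof.
move=> antiA; split=> [i|C chC]; first by rewrite /Defs.rho; case: ifP; rewrite ?ler01 ?lexx.
rewrite /Defs.rho -big_mkcondr /= sumr_const.
have : (#|(fun i : T => (i \in C) && (i \in A))| <= 1)%N.
  apply/card_le1_eqP => x y; rewrite /in_mem /= => /andP[xC xA] /andP[yC yA].
  case/comparable_leP: (chC x y xC yC) => [/(antiA _ _ xA yA) // | /ltW/(antiA _ _ yA xA) //].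
by case: #|_| => [|[|//]] _; rewrite ?mulr0n ?mulr1n ?ler01 ?lexx.
Qed.

Lemma chain_polytope_segment (u v x : T -> R) :
  chain_polytope u -> chain_polytope v -> segment u v x -> chain_polytope x.
Proof.
move=> [u0 u_chain] [v0 v_chain] [t [/andP[t0 t1] ->]]; split=> [i|C chC].
  by have := u0 i; have := v0 i; nra.
rewrite big_split /= -!mulr_sumr.
by have := u_chain C chC; have := v_chain C chC; nra.
Qed.

Lemma chain_polytope_le1 (y : T -> R) a : chain_polytope y -> y a <= 1.
Proof.
case=> _ y_chain; have := y_chain [set a]; rewrite big_set1; apply.
by move=> u v; rewrite !inE => /eqP-> /eqP->; apply: comparablexx.
Qed.

Lemma chain_polytope_le_pair (y : T -> R) a b :
  chain_polytope y -> (a < b)%O -> y a + y b <= 1.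
Proof.
case=> _ y_chain ab; have := y_chain [set a; b].
rewrite big_setU1 ?big_set1 ?inE ?(lt_eqF ab) //; apply.
move=> u v; rewrite !inE => /orP[]/eqP-> /orP[]/eqP->; rewrite ?comparablexx //.
  by rewrite lt_comparable.
by rewrite comparable_sym lt_comparable.
Qed.

Lemma chain_edge_setU1 (A : {set T}) x : is_antichain A -> is_antichain (x |: A) ->
  x \notin A -> is_edge chain_polytope (rho A) (rho (x |: A)).
Proof.
move=> antiA antixA xA.
pose P (k : T + T) := match k with inl a => a \in A | inr p => p \notin x |: A end.
pose c (k : T + T) : T -> R :=
  match k with inl a => unit_vec a | inr p => fun m => - unit_vec p m end.
pose b (k : T + T) : R := if k is inl _ then 1 else 0.
apply: (edge_of_tight_family (P := P) (c := c) (b := b)).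
- by move/rho_inj/setP/(_ x); rewrite !inE eqxx (negbTE xA).
- by move=> y; apply: chain_polytope_segment; apply: chain_polytope_rho.
- move=> [a|p] y /= Pk Cy; rewrite ?dotN dot_unit_vec; first exact: chain_polytope_le1.
  by rewrite oppr_le0; case: Cy.
- move=> [a|p] /= Pk; rewrite ?dotN !dot_unit_vec /Defs.rho.
    by rewrite Pk inE Pk orbT.
  by move: Pk; rewrite !inE negb_or => /andP[/negbTE-> /negbTE->]; rewrite oppr0.
- move=> y Cy tight; apply: (segment_rho (t := y x)) => [|i|i|i|i].
  + by rewrite chain_polytope_le1 // andbT; case: Cy.
  + by rewrite inE => /andP[iA _]; have := tight (inl i) iA; rewrite /= dot_unit_vec.
  + rewrite in_setC => iAx; have := tight (inr i) (contra (subsetP (subsetUr _ _) i) iAx).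
    by rewrite /= dotN dot_unit_vec => /eqP; rewrite oppr_eq0 => /eqP.
  + by rewrite !inE negb_or -andbA => /and3P[_ /negP nA /nA].
  + by rewrite !inE => /andP[iA /orP[/eqP->|]] //; rewrite (negbTE iA).
Qed.

Lemma chain_edge_lt (A B : {set T}) : is_antichain A -> is_antichain B ->
  A != set0 -> B != set0 -> {in A & B, forall a b, (a < b)%O} ->
  is_edge chain_polytope (rho A) (rho B).
Proof.
move=> antiA antiB /set0Pn[a0 a0A] /set0Pn[b0 b0B] AB.
have notinB a : a \in A -> a \notin B by move=> aA; apply/negP => /(AB a a aA); rewrite ltxx.
pose P (k : T + T * T) :=
  match k with inl p => p \notin A :|: B | inr (a, b) => (a \in A) && (b \in B) end.
pose c (k : T + T * T) : T -> R := match k with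
  | inl p => fun m => - unit_vec p m
  | inr (a, b) => fun m => unit_vec a m + unit_vec b m end.
pose b (k : T + T * T) : R := if k is inr _ then 1 else 0.
apply: (edge_of_tight_family (P := P) (c := c) (b := b)).
- by move/rho_inj/setP/(_ a0); rewrite a0A (negbTE (notinB _ a0A)).
- by move=> y; apply: chain_polytope_segment; apply: chain_polytope_rho.
- move=> [p|[a b']] y /= Pk Cy; rewrite ?dotN ?dotD !dot_unit_vec.
    by rewrite oppr_le0; case: Cy.
  by case/andP: Pk => aA bB; apply: chain_polytope_le_pair; last exact: AB.
- move=> [p|[a b']] /= Pk; rewrite ?dotN ?dotD !dot_unit_vec /Defs.rho.
    by move: Pk; rewrite !inE negb_or => /andP[/negbTE-> /negbTE->]; rewrite oppr0.
  case/andP: Pk => aA bB; rewrite aA bB (negbTE (notinB _ aA)).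
  by rewrite (negbTE (contraL (notinB b') bB)) addr0 add0r.
- move=> y Cy tight.
  have pair a b' : a \in A -> b' \in B -> y a + y b' = 1.
    by move=> aA bB; have := tight (inr (a, b')); rewrite /= aA bB dotD !dot_unit_vec; apply.
  apply: (segment_rho (t := y b0)) => [|i|i|i|i].
  + have := pair _ _ a0A b0B; case: Cy => y0 _; have := y0 a0; have := y0 b0.
    by move=> ? ? ?; apply/andP; split; lra.
  + by rewrite inE => /andP[/notinB/negbTE->].
  + rewrite in_setC => iAB; have := tight (inl i) iAB.
    by rewrite /= dotN dot_unit_vec => /eqP; rewrite oppr_eq0 => /eqP.
  + by rewrite inE => /andP[_ iA]; have := pair _ _ iA b0B; lra.
  + by rewrite inE => /andP[_ iB]; have := pair _ _ a0A iB; have := pair _ _ a0A b0B; lra.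
Qed.

Lemma chain_not_edge (A B : {set T}) x : is_antichain A -> x \in A -> x \notin B ->
  is_antichain (x |: B) -> A :\ x != B -> ~ is_edge chain_polytope (rho A) (rho B).
Proof.
move=> antiA xA xB antixB nAB.
apply: (rho_not_edge (Y := A :\ x) (Z := x |: B)) => //.
- by apply: chain_polytope_rho => u v uA vA; apply: antiA; apply: (subsetP (subD1set A x)).
- exact: chain_polytope_rho.
- apply/setP => i; rewrite !inE; case: (eqVneq i x) => [->|] //=.
  by rewrite xA.
- apply/setP => i; rewrite !inE; case: (eqVneq i x) => [->|] //=.
  by rewrite (negbTE xB) andbF.
- by apply/eqP => /setP/(_ x); rewrite !inE eqxx xA.
Qed.

(* Within an antichain the only chain edges are {B, x |: B} (chain_not_edge), and then
   <x |: B> \ <B> is connected through x. *)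
Lemma order_edge_of_chain_edge (A B : {set T}) : is_antichain (A :|: B) -> A != B ->
  is_edge chain_polytope (rho A) (rho B) ->
  is_edge order_polytope (rho (down A)) (rho (down B)).
Proof.
wlog [x xA xB] : A B / exists2 x, x \in A & x \notin B.
  move=> gen antiAB nAB edge.
  have [sAB|/subsetPn[x xA xB]] := boolP (A \subset B); last by apply: gen => //; exists x.
  have /subsetPn[x xB xA] : ~~ (B \subset A) by apply: contra nAB => sBA; rewrite eqEsubset sAB.
  by apply/is_edgeC/gen; rewrite 1?setUC 1?eq_sym //; [exists x | apply/is_edgeC].
move=> antiAB _ edge.
have antiA : is_antichain A by apply: antichain_subset antiAB (subsetUl A B).
have [eB|nB] := eqVneq (A :\ x) B; last first.
  exfalso; apply: (chain_not_edge antiA xA xB _ nB edge).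
  by apply: antichain_subset antiAB _; apply: setSU; rewrite sub1set.
have x_notin_downB : x \notin down B.
  apply/downP => -[b bB xb]; move: (bB); rewrite -eB !inE => /andP[bx bA].
  by move: bx; rewrite (antiAB x b) ?inE ?xA ?bA ?eqxx.
apply/is_edgeC/order_edgeP; try exact: down_ideal.
  by apply: down_subset; rewrite -eB subD1set.
apply: (connected_in_hub (h := x)) => [|d].
  by rewrite in_setD x_notin_downB; apply/downP; exists x.
rewrite in_setD => /andP[d_notin_downB /downP[a aA da]].
have ax : a = x.
  by apply: contraNeq d_notin_downB => ax; apply/downP; exists a; rewrite // -eB !inE ax.
apply: connect1; rewrite /comp_rel !in_setD x_notin_downB d_notin_downB -ax /=.
by rewrite comparable_sym le_comparable // andbT; apply/andP; split; apply/downP; exists a.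
Qed.

Lemma EstarOC (I J : {set T}) : EstarO (R := R) I J -> EstarO (R := R) J I.
Proof.
case=> idI idJ nIJ oedge not_cedge; split=> //; first by move/esym.
  exact: is_edgeC.
by move/is_edgeC.
Qed.

Lemma EstarCC (A B : {set T}) : EstarC (R := R) A B -> EstarC (R := R) B A.
Proof.
case=> antiA antiB nAB cedge not_oedge; split=> //; first by move/esym.
  exact: is_edgeC.
by move/is_edgeC.
Qed.

End ChainPolytope.

Section Rank.
Context {disp : Order.disp_t} {T : finPOrderType disp}.
Implicit Types (x y : T) (C : {set T}).

Lemma chainbP C : reflect (is_chain C) (chainb C).
Proof.
apply: (iffP forall_inP) => [chC x y xC yC | chC x xC].
  exact: (forall_inP (chC x xC) y yC).
by apply/forall_inP => y yC; apply: chC.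
Qed.

Definition chain_below x C := chainb C && [forall y in C, (y <= x)%O].

Lemma chain_below1 x : chain_below x [set x].
Proof.
apply/andP; split; last by apply/forall_inP => y /set1P->.
by apply/chainbP => u v /set1P-> /set1P->; apply: comparablexx.
Qed.

Lemma rankSE x : (rank x).+1 = \max_(C | chain_below x C) #|C|.
Proof.
rewrite /rank prednK //; apply: leq_trans (leq_bigmax_cond _ (chain_below1 x)).
by rewrite cards1.
Qed.

Lemma rank_witness x : exists2 C, chain_below x C & #|C| = (rank x).+1.
Proof.
rewrite rankSE (bigop.bigmax_eq_arg [set x] (chain_below1 x)).
by case: arg_maxnP => [|C xC _]; [apply: chain_below1 | exists C].
Qed.

Lemma card_chain_below x C : chain_below x C -> #|C| <= (rank x).+1.
Proof. by move=> xC; rewrite rankSE; apply: leq_bigmax_cond. Qed.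

Lemma lt_rank x y : (x < y)%O -> rank x < rank y.
Proof.
move=> xy; have [C /andP[/chainbP chC /forall_inP Cx] <-] := rank_witness x.
have Cy z : z \in C -> (z < y)%O by move=> zC; apply: le_lt_trans (Cx z zC) xy.
have yC : y \notin C by apply/negP => /Cy; rewrite ltxx.
suff /card_chain_below : chain_below y (y |: C) by rewrite cardsU1 yC add1n ltnS.
apply/andP; split; last by apply/forall_inP => z /setU1P[->|/Cy/ltW].
apply/chainbP => u v /setU1P[->|uC] /setU1P[->|vC].
- exact: comparablexx.
- by rewrite comparable_sym lt_comparable ?Cy.
- by rewrite lt_comparable ?Cy.
- exact: chC.
Qed.

Lemma le_rank x y : (x <= y)%O -> rank x <= rank y.
Proof. by rewrite le_eqVlt => /predU1P[->//|/lt_rank/ltnW]. Qed.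

Lemma rank_surj x k : k <= rank x -> exists y, rank y = k.
Proof.
move=> kx; have [C /andP[/chainbP chC /forall_inP Cx] cardC] := rank_witness x.
have rank_inj : {in C &, injective rank}.
  move=> u v uC vC ruv.
  by case: (comparable_ltgtP (chC u v uC vC)) => // /lt_rank; rewrite ruv ltnn.
have ranks_sub : {subset map rank (enum C) <= iota 0 (rank x).+1}.
  by move=> r /mapP[c]; rewrite mem_enum mem_iota ltnS => cC ->; apply/le_rank/Cx.
have ranks_uniq : uniq (map rank (enum C)).
  by rewrite map_inj_in_uniq ?enum_uniq // => u v; rewrite !mem_enum; apply: rank_inj.
have [|_ ranks_eq] := uniq_min_size ranks_uniq ranks_sub.
  by rewrite size_map -cardE cardC size_iota.
have : k \in iota 0 (rank x).+1 by rewrite mem_iota ltnS.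
by rewrite -ranks_eq => /mapP[y _ ->]; exists y.
Qed.

Lemma chain_sub_max_chain C : is_chain C -> exists2 M, is_max_chain M & C \subset M.
Proof.
move=> chC; have C_ext : chainb C && (C \subset C) by rewrite subxx andbT; apply/chainbP.
case: (@arg_maxnP _ C [pred D | chainb D && (C \subset D)] (fun D => #|D|) C_ext).
move=> M /andP[/chainbP chM sCM] maxM.
exists M => //; split=> // D chD sMD; apply/eqP; rewrite eq_sym eqEcard sMD /=.
by apply: maxM; rewrite inE (subset_trans sCM sMD) andbT; apply/chainbP.
Qed.

Lemma graded_rank_le n x : graded (T := T) n -> rank x <= n.
Proof.
move=> gr; have [C /andP[/chainbP chC _] cardC] := rank_witness x.
have [M /gr cardM sCM] := chain_sub_max_chain chC.
by rewrite -ltnS -cardM -cardC subset_leq_card.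
Qed.

End Rank.

Section MaxRanked.
Context {R : realType} {disp : Order.disp_t} {T : finPOrderType disp}.
Local Notation rho := (@rho R disp T).
Local Notation EstarO := (@EstarO R disp T).
Local Notation EstarC := (@EstarC R disp T).
Implicit Types (x y : T) (A B I J : {set T}).
Hypothesis rank_comparable : forall x y : T, rank x != rank y -> (x >=< y)%O.

Lemma lt_rankE x y : (x < y)%O = (rank x < rank y).
Proof.
apply/idP/idP => [/lt_rank //|rxy].
have := @rank_comparable x y; rewrite neq_ltn rxy => /(_ isT).
case/comparable_ltgtP => // [/lt_rank yx|xy]; move: rxy.
  by rewrite ltnNge (ltnW yx).
by rewrite xy ltnn.
Qed.

Lemma le_rankE x y : (x <= y)%O = (x == y) || (rank x < rank y).
Proof. by rewrite le_eqVlt lt_rankE. Qed.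

Lemma comparable_rankE x y : (x >=< y)%O = (x == y) || (rank x != rank y).
Proof.
rewrite /Order.comparable !le_rankE [y == x]eq_sym neq_ltn.
by case: (x == y); rewrite //= orbC.
Qed.

Lemma antichainP A : is_antichain A <-> {in A &, forall a b, rank a = rank b}.
Proof.
split=> [antiA a b aA bA | same x y xA yA]; last first.
  by rewrite le_rankE (same x y xA yA) ltnn orbF => /eqP.
case: (eqVneq (rank a) (rank b)) => // rab.
case/comparable_leP: (rank_comparable rab) => [/(antiA _ _ aA bA)|/ltW/(antiA _ _ bA aA)] eab.
  by rewrite eab eqxx in rab.
by rewrite eab eqxx in rab.
Qed.

Definition top_rank I := \max_(x in I) rank x.

Lemma top_rank_witness I : I != set0 -> exists2 m, m \in I & rank m = top_rank I.
Proof.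
case/set0Pn=> x xI; have I_pos : 0 < #|I| by apply/card_gt0P; exists x.
by have [m mI top_m] := eq_bigmax_cond rank I_pos; exists m.
Qed.

Lemma maxelE I x : (x \in maxel I) = (x \in I) && (rank x == top_rank I).
Proof.
rewrite inE; case: (boolP (x \in I)) => //= xI.
have x_le_top : rank x <= top_rank I by apply: leq_bigmax_cond.
apply/forall_inP/idP => [xmax | /eqP x_top y yI].
  have [|m mI m_top] := top_rank_witness (I := I); first by apply/set0Pn; exists x.
  rewrite eqn_leq x_le_top -m_top leqNgt; apply/negP => xm.
  by move: (xmax m mI); rewrite le_rankE xm orbT /= => /eqP mx; rewrite mx ltnn in xm.
rewrite le_rankE x_top; apply/implyP => /predU1P[->//|top_lt].
have : rank y <= top_rank I by apply: leq_bigmax_cond.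
by rewrite leqNgt top_lt.
Qed.

Lemma maxel_neq0 I : I != set0 -> maxel I != set0.
Proof.
by case/top_rank_witness=> m mI m_top; apply/set0Pn; exists m; rewrite maxelE mI m_top eqxx.
Qed.

Lemma ideal_rank_lt_top I x : is_ideal I -> rank x < top_rank I -> x \in I.
Proof.
move=> idI x_lt; have [I0|/top_rank_witness[m mI m_top]] := eqVneq I set0.
  by move: x_lt; rewrite I0 /top_rank big_set0.
by apply: (idI x m mI); rewrite le_rankE m_top x_lt orbT.
Qed.

Lemma down_antichain A a :
  is_antichain A -> a \in A -> down A = A :|: [set y | rank y < rank a].
Proof.
move=> antiA aA; have same := (antichainP A).1 antiA.
apply/setP => y; rewrite !inE; apply/existsP/idP => [[z /andP[zA]]|/orP[yA|ya]].
- by rewrite le_rankE (same z a zA aA) => /predU1P[->|->]; rewrite ?zA ?orbT.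
- by exists y; rewrite yA lexx.
- by exists a; rewrite aA le_rankE ya orbT.
Qed.

Lemma ideal_rank_lt_setU l (S : {set T}) :
  S \subset level l -> is_ideal ([set y | rank y < l] :|: S).
Proof.
move=> Sl x y; rewrite !inE le_rankE => /orP[yl|yS] /predU1P[->|xy].
- by rewrite yl.
- by rewrite (ltn_trans xy yl).
- by rewrite yS orbT.
- by move: (subsetP Sl y yS); rewrite inE => /eqP yl; rewrite -yl xy.
Qed.

Definition adjacent_levels (n : nat) A B :=
  exists l, 1 <= l <= n /\ A = level l.-1 /\ B \subset level l /\ 2 <= #|B|.

Lemma maxel_chain_edge I J : is_ideal I -> I \subset J -> I != set0 ->
  connected_in (J :\: I) -> is_edge chain_polytope (rho (maxel I)) (rho (maxel J)).
Proof.
move=> idI sIJ nI0 connD.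
have nJ0 : J != set0 by apply: contraNneq nI0 => J0; rewrite -subset0 -J0.
have top_le : top_rank I <= top_rank J.
  by apply/bigmax_leqP => x xI; apply: leq_bigmax_cond; apply: (subsetP sIJ).
move: top_le; rewrite leq_eqVlt => /predU1P[top_eq|top_lt].
- have D_top : {in J :\: I, forall d, rank d = top_rank I}.
    move=> d; rewrite inE => /andP[dI dJ]; apply/eqP; rewrite eqn_leq top_eq.
    rewrite leq_bigmax_cond //= -top_eq leqNgt.
    by apply: contra dI; apply: ideal_rank_lt_top.
  have antiD : is_antichain (J :\: I).
    by apply/antichainP => u v uD vD; rewrite !D_top.
  have [d eD] := connected_antichain antiD connD.
  have dD : d \in J :\: I by rewrite eD set11.
  have maxJ : maxel J = d |: maxel I.
    apply/setP => y; rewrite in_setU1 !maxelE -top_eq.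
    have [->|ny] := eqVneq y d.
      by move: (dD); rewrite in_setD => /andP[_ dJ]; rewrite dJ D_top ?eqxx.
    case: (boolP (y \in I)) => yI; first by rewrite (subsetP sIJ y yI).
    have yJ : y \notin J by apply: contra ny => yJ; rewrite -in_set1 -eD inE yI yJ.
    by rewrite (negbTE yJ).
  rewrite maxJ; apply: chain_edge_setU1; first exact: antichain_maxel.
    by rewrite -maxJ; apply: antichain_maxel.
  by rewrite maxelE; move: dD; rewrite inE => /andP[/negbTE->].
- apply: chain_edge_lt; [exact: antichain_maxel | exact: antichain_maxel
    | exact: maxel_neq0 | exact: maxel_neq0 |].
  by move=> a b; rewrite !maxelE lt_rankE => /andP[_ /eqP->] /andP[_ /eqP->].
Qed.

Lemma maxel_chain_edge_set0 J : J != set0 -> #|maxel J| <= 1 ->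
  is_edge chain_polytope (rho (maxel set0)) (rho (maxel J)).
Proof.
move=> nJ0 le1; have /set0Pn[m mJ] := maxel_neq0 nJ0.
have maxJ : maxel J = m |: set0.
  by apply/setP => y; rewrite setU0 inE; apply/idP/eqP => [yJ|->//]; apply: (card_le1_eqP le1).
rewrite maxel0 maxJ; apply: chain_edge_setU1; last by rewrite inE.
  by move=> x y; rewrite inE.
by rewrite -maxJ; apply: antichain_maxel.
Qed.

Lemma EstarO_subsetP I J : is_ideal I -> is_ideal J -> I \subset J -> I <> J ->
  EstarO I J <-> I = set0 /\ connected_in J /\ 2 <= #|maxel J|.
Proof.
move=> idI idJ sIJ nIJ; split.
  case=> _ _ _ /(order_edgeP idI idJ sIJ) connD not_cedge.
  have I0 : I = set0.
    by apply/eqP; apply: contraT => nI0; case: not_cedge; apply: maxel_chain_edge.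
  move: connD nIJ; rewrite I0 setD0 => connJ nJ0; split=> //; split=> //.
  rewrite ltnNge; apply/negP => le1; apply: not_cedge; rewrite I0.
  by apply: maxel_chain_edge_set0 => //; apply/eqP/nesym.
move=> [I0 [connJ /card_gt1P[a [a' [aJ a'J na]]]]]; split=> //.
  by rewrite I0 order_edgeP ?sub0set ?setD0 //; apply: ideal0.
rewrite I0 maxel0 => /is_edgeC; apply: (chain_not_edge (B := set0) (antichain_maxel (I := J)) aJ).
- by rewrite inE.
- by rewrite setU0 => x y /set1P-> /set1P->.
- by apply/set0Pn; exists a'; rewrite in_setD1 eq_sym na.
Qed.

Lemma down_rank_lt_connected A B a b : is_antichain A -> is_antichain B ->
  a \in A -> b \in B -> rank a < rank b ->
  #|B| <= 1 \/ (exists2 z, z \notin A & rank a <= rank z < rank b) ->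
  connected_in (down B :\: down A).
Proof.
move=> antiA antiB aA bB ab link.
have sameA := (antichainP A).1 antiA.
have sameB := (antichainP B).1 antiB.
have inD y : (y \in down B :\: down A) =
    ~~ ((y \in A) || (rank y < rank a)) && ((y \in B) || (rank y < rank b)).
  by rewrite in_setD (down_antichain antiA aA) (down_antichain antiB bB) !inE.
have bD : b \in down B :\: down A.
  rewrite inD bB andbT negb_or -leqNgt (ltnW ab) andbT.
  by apply: contraL ab => /sameA/(_ aA)->; rewrite ltnn.
(* Elements of <B> \ <A> outside B lie below the level of b, hence are comparable with b;
   the last hypothesis links the other elements of B to b. *)
have hub_low y : y \in down B :\: down A -> y \notin B ->
    connect (comp_rel (down B :\: down A)) b y.
  move=> yD yB; apply: connect1; rewrite /comp_rel bD yD comparable_rankE.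
  by move: yD; rewrite inD (negbTE yB) /= => /andP[_ yb]; rewrite neq_ltn yb !orbT.
apply: (connected_in_hub bD) => d dD; have [dB|] := boolP (d \in B); last exact: hub_low.
case: link => [le1|[z zA /andP[az zb]]]; first by rewrite (card_le1_eqP le1 d b dB bB) connect0.
have zB : z \notin B by apply: contraL zb => /sameB/(_ bB)->; rewrite ltnn.
have zD : z \in down B :\: down A by rewrite inD zb orbT negb_or zA -leqNgt az.
apply: connect_trans (hub_low z zD zB) (connect1 _).
by rewrite /comp_rel zD dD comparable_rankE (sameB d b dB bB) neq_ltn zb orbT.
Qed.

Lemma adjacent_levels_of_not_order_edge n A B a b : graded (T := T) n ->
  is_antichain A -> is_antichain B -> a \in A -> b \in B -> rank a < rank b ->
  ~ is_edge order_polytope (rho (down A)) (rho (down B)) -> adjacent_levels n A B.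
Proof.
move=> gr antiA antiB aA bB ab not_oedge.
have sameA := (antichainP A).1 antiA.
have sameB := (antichainP B).1 antiB.
have sub : down A \subset down B.
  apply/subsetP => y; rewrite !(down_antichain antiA aA).
  rewrite (down_antichain antiB bB) !inE => /orP[/sameA/(_ aA)->|ya].
    by rewrite ab orbT.
  by rewrite (ltn_trans ya ab) orbT.
have not_conn : ~ connected_in (down B :\: down A).
  by move/(order_edgeP (down_ideal (A := A)) (down_ideal (A := B)) sub)/not_oedge.
have gap z : z \notin A -> rank a <= rank z -> rank b <= rank z.
  move=> zA az; rewrite leqNgt; apply/negP => zb; apply: not_conn.
  by apply: (down_rank_lt_connected antiA antiB aA bB ab); right; exists z; rewrite ?az.
have card2 : 1 < #|B|.
  rewrite ltnNge; apply/negP => le1; apply: not_conn.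
  by apply: (down_rank_lt_connected antiA antiB aA bB ab); left.
have b_succ : rank b = (rank a).+1.
  have [z rz] := rank_surj ab.
  have zA : z \notin A by apply/negP => /sameA/(_ aA); rewrite rz => /esym/n_Sn.
  by apply/eqP; rewrite eqn_leq ab andbT -rz gap // rz.
exists (rank b); split; first by rewrite (leq_ltn_trans _ ab) // graded_rank_le.
split; last split=> //.
  rewrite b_succ /=; apply/setP => y; rewrite inE; apply/idP/eqP => [/sameA/(_ aA)->//|ya].
  by apply: contraT => yA; move: (gap y yA); rewrite ya b_succ leqnn ltnn => /(_ isT).
by apply/subsetP => y yB; rewrite inE (sameB y b yB bB).
Qed.

Lemma EstarC_of_adjacent_levels n A B : is_antichain A -> is_antichain B -> A <> B ->
  adjacent_levels n A B -> EstarC A B.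
Proof.
move=> antiA antiB nAB [l [/andP[l_pos _] [eA [Bl /card_gt1P[b [b' [bB b'B nbb']]]]]]].
have rB y : y \in B -> rank y = l by move/(subsetP Bl); rewrite inE => /eqP.
have [a ra] := rank_surj (leq_pred (rank b)).
have aA : a \in A by rewrite eA inE ra rB.
have rA y : y \in A -> rank y = l.-1 by rewrite eA inE => /eqP.
pose L := [set y : T | rank y < l].
have downA : down A = L.
  apply/setP => y; rewrite (down_antichain antiA aA) !inE ra (rB b bB) eA inE.
  by rewrite -leq_eqVlt -ltnS prednK.
have downB : down B = L :|: B.
  by rewrite (down_antichain antiB bB) (rB b bB) setUC.
split=> //.
  apply: chain_edge_lt => //.
  - by apply/set0Pn; exists a.
  - by apply/set0Pn; exists b.
  - by move=> x y xA yB; rewrite lt_rankE rA // rB // prednK.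
rewrite downA downB; apply: (rho_not_edge (Y := L :|: [set b]) (Z := L :|: (B :\ b))).
- by apply/order_polytope_rho/ideal_rank_lt_setU => //; rewrite sub1set; apply: (subsetP Bl).
- by apply/order_polytope_rho/ideal_rank_lt_setU => //; apply: subset_trans (subD1set B b) Bl.
- apply/setP => y; rewrite !inE.
  by case: (eqVneq y b) => [->|_]; case: (rank _ < l); rewrite /= ?bB ?orbT ?orbF.
- apply/setP => y; rewrite !inE.
  by case: (eqVneq y b) => [->|_]; case: (rank _ < l).
- by apply/eqP => /setP/(_ b); rewrite !inE eqxx orbT rB ?ltnn.
- by apply/eqP => /setP/(_ b'); rewrite !inE b'B eq_sym (negbTE nbb') rB ?ltnn.
Qed.

Lemma EstarC_adjacent_levels n A B : graded (T := T) n ->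
  EstarC A B -> adjacent_levels n A B \/ adjacent_levels n B A.
Proof.
move=> gr [antiA antiB nAB cedge not_oedge].
have [/exists_inP[a aA /exists_inP[b bB]]|same] :=
  boolP [exists a in A, exists b in B, rank a != rank b].
  rewrite neq_ltn => /orP[ab|ba]; first by left; apply: adjacent_levels_of_not_order_edge ab _.
  by right; apply: adjacent_levels_of_not_order_edge ba _ => // /is_edgeC.
exfalso; apply/not_oedge/order_edge_of_chain_edge => //; last exact/eqP.
have rAB : {in A & B, forall a b, rank a = rank b}.
  move=> a b aA bB; apply/eqP; apply: contraNT same => rab.
  by apply/exists_inP; exists a => //; apply/exists_inP; exists b.
apply/antichainP => u v; rewrite !inE.
move=> /orP[uA|uB] /orP[vA|vB]; [exact: (antichainP A).1 | exact: rAB |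
  exact/esym/rAB | exact: (antichainP B).1].
Qed.

End MaxRanked.

Theorem lemma3p1 (R : realType) (disp : Order.disp_t) (T : finPOrderType disp)
    (n : nat) (hP : @max_ranked disp T n) :
  (forall I J : {set T}, is_ideal I -> is_ideal J -> I <> J ->
     (@EstarO R disp T I J <->
       (I = set0 /\ connected_in J /\ 2 <= #|maxel J|)
       \/ (J = set0 /\ connected_in I /\ 2 <= #|maxel I|)))
  /\
  (forall A B : {set T}, is_antichain A -> is_antichain B -> A <> B ->
     (@EstarC R disp T A B <->
       (exists l, 1 <= l <= n /\ A = level l.-1 /\ B \subset level l /\ 2 <= #|B|)
       \/ (exists l, 1 <= l <= n /\ B = level l.-1 /\ A \subset level l /\ 2 <= #|A|))).
Proof.
have [gr rank_comparable] := hP.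
split=> [I J idI idJ nIJ | A B antiA antiB nAB]; split.
- move=> EIJ; have [_ _ _ /(order_edge_subset idI idJ)[sIJ|sJI] _] := EIJ.
    by left; apply/(EstarO_subsetP (R := R) rank_comparable idI idJ sIJ nIJ).
  by right; apply/(EstarO_subsetP (R := R) rank_comparable idJ idI sJI (nesym nIJ))/EstarOC.
- case=> [EJ|EI].
    have sIJ : I \subset J by case: EJ => -> _; apply: sub0set.
    exact/(EstarO_subsetP (R := R) rank_comparable idI idJ sIJ nIJ).
  have sJI : J \subset I by case: EI => -> _; apply: sub0set.
  exact/EstarOC/(EstarO_subsetP (R := R) rank_comparable idJ idI sJI (nesym nIJ)).
- exact: EstarC_adjacent_levels.
- case=> adj; first exact: EstarC_of_adjacent_levels adj.
  by apply/EstarCC/(EstarC_of_adjacent_levels (R := R) rank_comparable antiB antiA (nesym nAB) adj).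
Qed.
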